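(* Let $L$ be an invertible linear map on $\mathcal{S}^n$ such that $L(CP_n)\subseteq CP_n$. If $L$ is a standard map, then $L=\mathcal{L}_{A,B}$ for suitable entrywise nonnegative matrices $A,B\in M_n(\mathbb{R})$. Conversely, for $n\le 4$, if $L=\mathcal{L}_{A,B}$ with $B$ invertible, then $L$ is a standard map.
   Context: $\mathcal{S}^n$ denotes the space of real symmetric $n\times n$ matrices. $CP_n=\{BB^t: B \text{ a real entrywise nonnegative } n\times k \text{ matrix for some } k\}$ is the cone of completely positive matrices. A standard map on $\mathcal{S}^n$ is a map of the form $X\mapsto RXR^t$ for a fixed $R\in M_n(\mathbb{R})$. For $A,B\in M_n(\mathbb{R})$, the generalized Lyapunov map is $\mathcal{L}_{A,B}(X)=AXB+B^tXA^t$ on $\mathcal{S}^n$. *)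

From mathcomp Require Import all_boot all_order all_algebra.
From mathcomp Require Import reals.
Set Implicit Arguments. Unset Strict Implicit. Unset Printing Implicit Defensive.
Import Order.TTheory GRing.Theory Num.Theory.
Local Open Scope ring_scope.

Definition symmx (R : realType) (n : nat) (X : 'M[R]_n) : Prop := X^T = X.

Definition nonneg_mx (R : realType) (m k : nat) (B : 'M[R]_(m, k)) : Prop :=
  forall i j, 0 <= B i j.

Definition CP (R : realType) (n : nat) (X : 'M[R]_n) : Prop :=
  exists k (B : 'M[R]_(n, k)), nonneg_mx B /\ X = B *m B^T.

(* A map L : 'M_n -> 'M_n viewed as a map on S^n (only its values on
   symmetric matrices matter): it maps S^n into S^n and is linear there. *)
Definition linear_on_sym (R : realType) (n : nat) (L : 'M[R]_n -> 'M[R]_n) : Prop :=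
  (forall X, symmx X -> symmx (L X)) /\
  (forall (a : R) X Y, symmx X -> symmx Y -> L (a *: X + Y) = a *: L X + L Y).

Definition invertible_on_sym (R : realType) (n : nat) (L : 'M[R]_n -> 'M[R]_n) : Prop :=
  (forall X Y, symmx X -> symmx Y -> L X = L Y -> X = Y) /\
  (forall Y, symmx Y -> exists2 X, symmx X & L X = Y).

Definition preserves_CP (R : realType) (n : nat) (L : 'M[R]_n -> 'M[R]_n) : Prop :=
  forall X, CP X -> CP (L X).

Definition standard_map (R : realType) (n : nat) (L : 'M[R]_n -> 'M[R]_n) : Prop :=
  exists Q : 'M[R]_n, forall X, symmx X -> L X = Q *m X *m Q^T.

Definition lyap (R : realType) (n : nat) (A B : 'M[R]_n) (X : 'M[R]_n) : 'M[R]_n :=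
  A *m X *m B + B^T *m X *m A^T.

Definition is_lyap (R : realType) (n : nat) (L : 'M[R]_n -> 'M[R]_n) (A B : 'M[R]_n) : Prop :=
  forall X, symmx X -> L X = lyap A B X.

(* If L X = Q X Q^T preserves CP_n, applying it to the rank-one matrices x x^T
   (x >= 0) shows that Q x is entrywise of one sign for every x >= 0.  If a
   column k of Q were nonnegative and a column j nonpositive, one-signedness
   of Q (e_k + t e_j) for all t >= 0 would force every 2x2 minor of these two
   columns to vanish, against the invertibility of Q.  Hence P = Q or P = -Q
   is nonnegative, and L = L_{P, P^T/2}.

   Conversely, if L = L_{A,B} with B invertible, write A = B^T M.  Since
   completely positive matrices are positive semidefinite, testing L(x x^T)
   against B^{-1} w gives (w^T M x)(w^T x) >= 0 for all x >= 0 and all w.  Two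
   linear forms with pointwise nonnegative product are proportional, so every
   x >= 0 is an eigenvector of M with a nonnegative eigenvalue, i.e.
   M = lam I with lam >= 0, and L X = Q X Q^T for Q = sqrt(2 lam) B^T. *)
From mathcomp Require Import all_boot all_order all_algebra.
From mathcomp Require Import reals.
From mathcomp Require Import ring lra.
Set Implicit Arguments. Unset Strict Implicit. Unset Printing Implicit Defensive.
Import Order.TTheory GRing.Theory Num.Theory.
Local Open Scope ring_scope.

Lemma affine_mul_ge0_eq (F : realFieldType) (p q r s : F) :
  (forall t, 0 <= (p + t * q) * (r + t * s)) -> p * s = q * r.
Proof.
wlog q0 : p q r s / q != 0.
  move=> wlog H; have [q0|q0] := eqVneq q 0; last exact: wlog.
  have [s0|s0] := eqVneq s 0; first by rewrite q0 s0 mulr0 mul0r.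
  by rewrite mulrC [RHS]mulrC; apply/esym/wlog => // t; rewrite mulrC.
move=> H; apply/eqP; rewrite -subr_eq0; apply: contraT => d0.
set d := p * s - q * r; set c := (1 + (s * q) ^+ 2)^-1.
have c0 : 0 < c by rewrite invr_gt0; nra.
have sqc : s * q * c < 1 by rewrite /c ltr_pdivrMr ?mul1r; nra.
have d2 : 0 < d ^+ 2 by rewrite exprn_even_gt0.
(* At this t the first factor is c q d and s (p + t q) - q (r + t s) = d,
   so the product is c d^2 (s q c - 1) < 0. *)
have := H ((c * q * d - p) / q).
have -> : (p + (c * q * d - p) / q * q) * (r + (c * q * d - p) / q * s) =
          c * d ^+ 2 * (s * q * c - 1) by rewrite /d; field.
by rewrite pmulr_rge0 ?subr_ge0 ?leNgt ?sqc //; exact: mulr_gt0.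
Qed.

Lemma unitmx_cols_not_proportional (F : fieldType) n (Q : 'M[F]_n) a j k :
  Q \in unitmx -> k != j -> Q a j != 0 ->
  ~ (forall c, Q a k * Q c j = Q a j * Q c k).
Proof.
move=> QU kj Qaj minor.
set v : 'cV[F]_n := Q a j *: delta_mx k 0 - Q a k *: delta_mx j 0.
have Qv : Q *m v = 0.
  apply/matrixP => c z; rewrite ord1 [RHS]mxE.
  by rewrite mulmxBr -!scalemxAr -!colE !mxE minor mulrC subrr.
have /matrixP/(_ k 0) := mulKmx QU v; rewrite Qv mulmx0.
rewrite !mxE eqxx (negbTE kj) mulr1 mulr0 subr0 => /esym/eqP.
by rewrite (negbTE Qaj).
Qed.

Section Pencil.
Variable R : comPzRingType.

Definition pencil n (i j : 'I_n) (t : R) : 'cV[R]_n :=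
  delta_mx i 0 + t *: delta_mx j 0.

Lemma pencilE n (i j a : 'I_n) t :
  pencil i j t a 0 = (a == i)%:R + t * (a == j)%:R.
Proof. by rewrite !mxE !eqxx !andbT. Qed.

Lemma mulmx_pencil m n (Q : 'M[R]_(m, n)) i j t a :
  (Q *m pencil i j t) a 0 = Q a i + t * Q a j.
Proof. by rewrite mulmxDr -scalemxAr -!colE !mxE. Qed.

Lemma tr_pencil_mul n (v : 'cV[R]_n) i j t :
  ((pencil i j t)^T *m v) 0 0 = v i 0 + t * v j 0.
Proof. by rewrite -(trmxK v) -trmx_mul mxE mulmx_pencil !mxE. Qed.

End Pencil.

Lemma forms_mul_ge0_proportional (F : realFieldType) n (u x : 'cV[F]_n) :
  (forall w : 'cV_n, 0 <= (w^T *m u) 0 0 * (w^T *m x) 0 0) ->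
  forall i k, u i 0 * x k 0 = u k 0 * x i 0.
Proof.
move=> H i k; apply: affine_mul_ge0_eq => t.
by have := H (pencil i k t); rewrite !tr_pencil_mul.
Qed.

Section CompletelyPositive.
Variable R : realType.

Lemma CP_ge0 n (X : 'M[R]_n) : CP X -> forall a b, 0 <= X a b.
Proof.
case=> k [C [C0 ->]] a b; rewrite mxE; apply: sumr_ge0 => i _.
by rewrite mxE; apply: mulr_ge0.
Qed.

Lemma CP_psd n (X : 'M[R]_n) :
  CP X -> forall z : 'cV_n, 0 <= (z^T *m X *m z) 0 0.
Proof.
case=> k [C [_ ->]] z.
have -> : z^T *m (C *m C^T) *m z = (C^T *m z)^T *m (C^T *m z).
  by rewrite trmx_mul trmxK !mulmxA.
by rewrite mxE; apply: sumr_ge0 => i _; rewrite mxE -expr2 sqr_ge0.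
Qed.

Lemma CP_rank1 n (x : 'cV[R]_n) : nonneg_mx x -> CP (x *m x^T).
Proof. by move=> x0; exists 1%N, x. Qed.

Lemma symmx_rank1 n (x : 'cV[R]_n) : symmx (x *m x^T).
Proof. by rewrite /symmx trmx_mul trmxK. Qed.

Lemma pencil_nonneg n (i j : 'I_n) (t : R) : 0 <= t -> nonneg_mx (pencil i j t).
Proof. by move=> t0 a b; rewrite !mxE addr_ge0 ?mulr_ge0 ?ler0n. Qed.

Definition one_signed n (v : 'cV[R]_n) := forall a b, 0 <= v a 0 * v b 0.

Lemma congruence_CP_one_signed n (L : 'M[R]_n -> 'M[R]_n) (Q : 'M[R]_n)
    (x : 'cV[R]_n) :
  (forall X, symmx X -> L X = Q *m X *m Q^T) -> preserves_CP L ->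
  nonneg_mx x -> one_signed (Q *m x).
Proof.
move=> LQ LCP x0 a b; have := CP_ge0 (LCP _ (CP_rank1 x0)) a b.
rewrite LQ; last exact: symmx_rank1.
have -> : Q *m (x *m x^T) *m Q^T = (Q *m x) *m (Q *m x)^T.
  by rewrite trmx_mul !mulmxA.
by rewrite [X in _ <= X -> _]mxE big_ord1 [(_^T) _ _]mxE.
Qed.

Section OneSignedImages.
Variables (n : nat) (Q : 'M[R]_n).
Hypothesis Q_one_signed : forall x, nonneg_mx x -> one_signed (Q *m x).

Lemma one_signed_col a j c : 0 <= Q c j * Q a j.
Proof.
have := Q_one_signed (pencil_nonneg j j (lexx 0)) c a.
by rewrite !mulmx_pencil !mul0r !addr0.
Qed.

(* For t <= 0 both factors are nonnegative, for t >= 0 the pencil is. *)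
Lemma opposite_cols_minor k j :
  (forall c, 0 <= Q c k) -> (forall c, Q c j <= 0) ->
  forall a c, Q a k * Q c j = Q a j * Q c k.
Proof.
move=> Qk Qj a c; apply: affine_mul_ge0_eq => t.
have [t0|t0] := leP 0 t.
  by have := Q_one_signed (pencil_nonneg k j t0) a c; rewrite !mulmx_pencil.
by apply: mulr_ge0; rewrite addr_ge0 ?nmulr_rge0.
Qed.

Lemma unitmx_one_signed_nonneg :
  Q \in unitmx -> nonneg_mx Q \/ nonneg_mx (- Q).
Proof.
move=> QU; have [/existsP[a /existsP[j Qaj]]|/existsPn Q0] :=
  boolP [exists a, exists j, Q a j < 0]; last first.
  by left => a j; move/existsPn: (Q0 a) => /(_ j); rewrite leNgt.
right => b k; rewrite mxE oppr_ge0 leNgt; apply/negP => Qbk.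
have Qj c : Q c j <= 0 by have := one_signed_col a j c; nra.
have Qk c : 0 <= Q c k by have := one_signed_col b k c; nra.
have kj : k != j by apply: contraTneq Qbk => ->; rewrite -leNgt.
apply: (unitmx_cols_not_proportional QU kj (ltr0_neq0 Qaj)) => c.
exact: opposite_cols_minor.
Qed.

End OneSignedImages.

Lemma standard_map_unitmx n (L : 'M[R]_n -> 'M[R]_n) (Q : 'M[R]_n) :
  invertible_on_sym L -> (forall X, symmx X -> L X = Q *m X *m Q^T) ->
  Q \in unitmx.
Proof.
move=> [_ Lsurj] LQ.
have [X sX] : exists2 X, symmx X & L X = 1%:M.
  by apply: Lsurj; rewrite /symmx trmx1.
rewrite LQ // => /(congr1 determinant); rewrite !det_mulmx det_tr det1.
rewrite unitmxE unitfE; apply: contra_eq_neq => ->.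
by rewrite !mul0r eq_sym oner_neq0.
Qed.

Lemma lyap_half_tr n (P X : 'M[R]_n) : lyap P (2^-1 *: P^T) X = P *m X *m P^T.
Proof.
rewrite /lyap [(_ *: _)^T]linearZ /= trmxK -scalemxAr -!scalemxAl -scalerDl.
by rewrite -[2^-1]mul1r -splitr scale1r.
Qed.

Lemma standard_CP_map_nonneg_lyap n (L : 'M[R]_n -> 'M[R]_n) :
  invertible_on_sym L -> preserves_CP L -> standard_map L ->
  exists A B : 'M[R]_n, [/\ nonneg_mx A, nonneg_mx B & is_lyap L A B].
Proof.
move=> Linv LCP [Q LQ].
suff [P P0 LP] : exists2 P : 'M[R]_n, nonneg_mx P &
    forall X, symmx X -> L X = P *m X *m P^T.
  exists P, (2^-1 *: P^T); split=> // [i j|X sX].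
    by rewrite !mxE mulr_ge0 // invr_ge0 ler0n.
  by rewrite LP ?lyap_half_tr.
have Q1 x := @congruence_CP_one_signed n L Q x LQ LCP.
case: (unitmx_one_signed_nonneg Q1 (standard_map_unitmx Linv LQ)) => Q0.
  by exists Q.
exists (- Q) => // X sX.
by rewrite LQ // linearN /= mulNmx mulmxN mulNmx opprK.
Qed.

Lemma lyap_rank1_quad n (A B : 'M[R]_n) (x z : 'cV[R]_n) :
  (z^T *m lyap A B (x *m x^T) *m z) 0 0 =
  2 * ((z^T *m A *m x) 0 0 * (x^T *m B *m z) 0 0).
Proof.
set u := z^T *m A *m x; set v := x^T *m B *m z.
have -> : z^T *m lyap A B (x *m x^T) *m z = u *m v + v^T *m u^T.
  by rewrite /lyap mulmxDr mulmxDl /u /v !trmx_mul !trmxK !mulmxA.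
by rewrite !mxE !big_ord1 !mxE; ring.
Qed.

Lemma lyap_CP_forms_ge0 n (L : 'M[R]_n -> 'M[R]_n) (A B : 'M[R]_n)
    (x : 'cV[R]_n) :
  preserves_CP L -> is_lyap L A B -> B \in unitmx -> nonneg_mx x ->
  forall w : 'cV_n,
    0 <= (w^T *m ((invmx B)^T *m A *m x)) 0 0 * (w^T *m x) 0 0.
Proof.
move=> LCP LAB BU x0 w.
have := CP_psd (LCP _ (CP_rank1 x0)) (invmx B *m w).
rewrite LAB ?lyap_rank1_quad; last exact: symmx_rank1.
rewrite pmulr_rge0 ?ltr0n // trmx_mul !mulmxA -(mulmxA x^T) mulmxV // mulmx1.
have -> : (w^T *m x) 0 0 = (x^T *m w) 0 0.
  by rewrite !mxE; apply: eq_bigr => i _; rewrite !mxE mulrC.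
by rewrite trmx_inv.
Qed.

Lemma forms_ge0_scalar_mx n (M : 'M[R]_n) :
  (forall x : 'cV_n, nonneg_mx x ->
     forall w : 'cV_n, 0 <= (w^T *m (M *m x)) 0 0 * (w^T *m x) 0 0) ->
  exists2 lam, 0 <= lam & M = lam%:M.
Proof.
move=> H.
have Mprop x (x0 : nonneg_mx x) := forms_mul_ge0_proportional (H x x0).
have Moff i k : k != i -> M k i = 0.
  move=> ki; have := Mprop _ (pencil_nonneg i i (lexx 0)) k i.
  by rewrite !mulmx_pencil !pencilE eqxx (negbTE ki) !mul0r !addr0 mulr1 mulr0.
have Mdiag i j : M i i = M j j.
  have [->//|ji] := eqVneq j i.
  have := Mprop _ (pencil_nonneg i j ler01) i j.
  have ij : i != j by rewrite eq_sym.
  rewrite !mulmx_pencil !pencilE !eqxx (negbTE ji) (negbTE ij).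
  rewrite (Moff _ _ ij) (Moff _ _ ji).
  by rewrite /= mulr0n mulr1n; lra.
have Mpos i : 0 <= M i i.
  have := H _ (pencil_nonneg i i (lexx 0)) (pencil i i 0).
  by rewrite !tr_pencil_mul mulmx_pencil !pencilE eqxx !mul0r !addr0 mulr1.
case: n M H Mprop Moff Mdiag Mpos => [|n'] M _ _ Moff Mdiag Mpos.
  by exists 0 => //; apply/matrixP => -[].
exists (M ord0 ord0) => //; apply/matrixP => i j; rewrite mxE.
by have [<-|ij] := eqVneq i j; rewrite ?mulr1n ?mulr0n ?Mdiag // Moff // eq_sym.
Qed.

Lemma lyap_scalar_tr n (B X : 'M[R]_n) lam : 0 <= lam ->
  lyap (lam *: B^T) B X =
  (Num.sqrt (2 * lam) *: B^T) *m X *m (Num.sqrt (2 * lam) *: B^T)^T.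
Proof.
move=> lam0; rewrite /lyap !linearZ /= trmxK.
rewrite -!scalemxAl scalerA -expr2 sqr_sqrtr ?mulr_ge0 // -scalerDl.
by rewrite mulr_natl mulr2n.
Qed.

Lemma lyap_CP_map_standard n (L : 'M[R]_n -> 'M[R]_n) (A B : 'M[R]_n) :
  preserves_CP L -> B \in unitmx -> is_lyap L A B -> standard_map L.
Proof.
move=> LCP BU LAB.
have [lam lam0 Mlam] :=
  forms_ge0_scalar_mx (fun x x0 => lyap_CP_forms_ge0 LCP LAB BU x0).
have AE : A = lam *: B^T.
  by rewrite -[A]mul1mx -trmx1 -(mulVmx BU) trmx_mul -mulmxA Mlam mul_mx_scalar.
exists (Num.sqrt (2 * lam) *: B^T) => X sX.
by rewrite LAB // AE lyap_scalar_tr.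
Qed.

End CompletelyPositive.

Theorem mainTheorem4 (R : realType) (n : nat) (L : 'M[R]_n -> 'M[R]_n) :
  linear_on_sym L -> invertible_on_sym L -> preserves_CP L ->
  (standard_map L ->
     exists A B : 'M[R]_n, [/\ nonneg_mx A, nonneg_mx B & is_lyap L A B]) /\
  ((n <= 4)%N ->
     forall A B : 'M[R]_n, B \in unitmx -> is_lyap L A B -> standard_map L).
Proof.
move=> _ Linv LCP; split; first exact: standard_CP_map_nonneg_lyap.
by move=> _ A B; exact: lyap_CP_map_standard.
Qed.
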